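(* For $\mu\ge2$, the generating series $W_\mu(q)=\sum_g w_{\mu,g}q^g$, where $w_{\mu,g}$ is the number of weakly admissible compositions of $g$ whose maximal part equals $\mu$, is $$W_\mu(q)=\frac{1+\sum_{i=\lceil\mu/2\rceil}^{\mu}q^i}{1-I_\mu}\;q^\mu\;\frac{1+\sum_{i=\lfloor\mu/2\rfloor}^{\mu-1}q^i}{1-I_{\mu-1}},$$ where for $n\ge1$, $I_n=\sum_{1\le a,b\le n,\ a+b\ge n}q^{a+b}=q^n\bigl(-2+\sum_{i=0}^n(n+1-i)q^i\bigr)$.
   Context: A composition $x_1+\cdots+x_{m-1}$ of $g=\sum x_i$ (parts positive integers) with maximum $\mu$ has a last maximal part $x_l$, i.e. $x_1,\dots,x_{l-1}\le x_l=\mu$ and $x_{l+1},\dots,x_{m-1}<\mu$. It is weakly admissible if $x_l\le x_i+x_{l-i}$ for all $1\le i\le l-1$ and $x_l\le 1+x_{l+i}+x_{m-i}$ for all $1\le i\le m-1-l$. *)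

From HB Require Import structures.
From mathcomp Require Import all_boot all_order all_algebra.
Set Implicit Arguments. Unset Strict Implicit. Unset Printing Implicit Defensive.
Import Order.TTheory GRing.Theory Num.Theory.

(* 1-based access to the parts of a composition s = [x_1; ...; x_{m-1}] *)
Definition part (s : seq nat) (i : nat) : nat := nth 0 s i.-1.

Definition composition (s : seq nat) (g : nat) : bool :=
  all (fun x => 0 < x) s && (sumn s == g).

(* maximal part (0 for the empty sequence) *)
Definition maxpart (s : seq nat) : nat := \max_(x <- s) x.

Definition last_max (s : seq nat) (l : nat) : bool :=
  [&& 1 <= l <= size s,
      all (fun i => part s i <= part s l) (iota 1 (l - 1))
    & all (fun i => part s i < part s l) (iota l.+1 (size s - l))].

(* weakly admissible (here m - 1 = size s, so m - i = size s + 1 - i) *)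
Definition weakly_admissible (s : seq nat) : bool :=
  has (fun l =>
    [&& last_max s l,
        all (fun i => part s l <= part s i + part s (l - i)) (iota 1 (l - 1))
      & all (fun i => part s l <= 1 + part s (l + i) + part s (size s + 1 - i))
            (iota 1 (size s - l))])
    (iota 1 (size s)).

(* A composition of g has at most g parts, each at most g, so it is encoded
   (injectively) by a k.-tuple of 'I_g.+1 with k <= g. *)
Definition w (mu g : nat) : nat :=
  \sum_(k < g.+1)
    #|[pred t : k.-tuple 'I_g.+1 |
        let s := [seq val i | i <- t] in
        [&& composition s g, weakly_admissible s & maxpart s == mu]]|.

Local Open Scope ring_scope.

Definition Ipoly (n : nat) : {poly int} :=
  \sum_(1 <= a < n.+1) \sum_(1 <= b < n.+1 | (n <= a + b)%N) 'X^(a + b).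

From HB Require Import structures.
From mathcomp Require Import all_boot all_order all_algebra.
From mathcomp Require Import zify ring.
Import Order.TTheory GRing.Theory Num.Theory.
Set Implicit Arguments. Unset Strict Implicit. Unset Printing Implicit Defensive.

(* Part 1, the closed form of I_n, is a comparison of coefficients: the
   coefficient of q^k in I_n counts the pairs (a, b) in [1, n]^2 with
   a + b = k >= n.

   Part 2.  Cutting a composition s with maximal part mu at its last maximal
   part, s = z ++ mu :: y, weak admissibility says exactly that z has parts
   <= mu with z_i + z_(|z|+1-i) >= mu, and that y has parts <= mu - 1 with
   y_i + y_(|y|+1-i) >= mu - 1: z and y are "balanced words" for n = mu and
   n = mu - 1.  Hence W_mu = B_mu * q^mu * B_(mu-1), where B_n counts the
   n-balanced compositions.  An n-balanced word of length >= 2 is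
   a :: m ++ [b] with (a, b) one of the pairs summed in I_n and m n-balanced;
   the shorter ones are [] and [x] with ceil(n/2) <= x <= n.  Therefore
   (1 - I_n) B_n = 1 + sum_(ceil(n/2) <= i <= n) q^i, and multiplying out
   gives the proposition.

   All series are compared up to the degree g. *)

(* Every composition of g has at most g
   parts, each at most g, so it occurs exactly once in [small_seqs g]; counting
   compositions with a property is then a [count] over this list, and two such
   counts agree as soon as the counted sets are in bijection. *)

Definition small_seqs (g : nat) : seq (seq nat) :=
  flatten [seq [seq [seq val i | i <- tval t] | t <- enum {: k.-tuple 'I_g.+1}]
          | k <- iota 0 g.+1].

Lemma count_small_seqs (P : pred (seq nat)) g :
  count P (small_seqs g) =
  \sum_(k < g.+1) #|[pred t : k.-tuple 'I_g.+1 | P [seq val i | i <- t]]|.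
Proof.
rewrite count_flatten sumnE !big_map -(subn0 g.+1) -/(index_iota 0 g.+1).
rewrite big_mkord; apply: eq_bigr => k _.
by rewrite count_map cardE /enum_mem -size_filter filter_predT.
Qed.

Lemma uniq_flatten_sized (F : nat -> seq (seq nat)) (r : seq nat) :
  uniq r -> (forall k, uniq (F k)) -> (forall k s, s \in F k -> size s = k) ->
  uniq (flatten [seq F k | k <- r]).
Proof.
move=> + uF sF; elim: r => //= k r IH /andP[kr ur].
rewrite cat_uniq uF IH // andbT; apply/hasPn => s /flattenP [x /mapP [k' k'r ->]].
move=> sx; apply/negP => /sF sk; move: (sF _ _ sx); rewrite sk => ek.
by rewrite ek k'r in kr.
Qed.

(* Different tuples give different sequences. *)
Lemma small_seqs_uniq g : uniq (small_seqs g).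
Proof.
apply: uniq_flatten_sized; first exact: iota_uniq.
- move=> k; rewrite map_inj_uniq ?enum_uniq // => t1 t2 /inj_map eq12.
  by apply: val_inj; apply: eq12 => x y; apply: val_inj.
- by move=> k s /mapP [t _ ->]; rewrite size_map size_tuple.
Qed.

Lemma composition_small s g :
  composition s g -> (size s <= g) && all (fun x => x <= g) s.
Proof.
case/andP => /allP + /eqP <-; elim: s => //= x s IH pos.
have /andP [sz ub] := IH (fun y ys => pos y (mem_behead (s := x :: s) ys)).
have := pos x (mem_head _ _); rewrite (sub_all _ ub) /= ?andbT; first lia.
by move=> y /=; lia.
Qed.

Lemma composition_mem s g : composition s g -> s \in small_seqs g.
Proof.
move=> /composition_small /andP [sz ub]; apply/flattenP.
exists [seq [seq val i | i <- tval t] | t <- enum {: (size s).-tuple 'I_g.+1}].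
  by apply/mapP; exists (size s); rewrite ?mem_iota.
have sz' : size [seq (inord x : 'I_g.+1) | x <- s] == size s by rewrite size_map.
apply/mapP; exists (Tuple sz'); first by rewrite mem_enum.
rewrite /= -map_comp map_id_in // => x xs /=; rewrite inordK //.
by move/allP: ub => /(_ x xs).
Qed.

Definition ncomp (P : pred (seq nat)) (g : nat) : nat :=
  count (fun s => composition s g && P s) (small_seqs g).

Lemma count_bij (T1 T2 : eqType) (s1 : seq T1) (s2 : seq T2)
    (P1 : pred T1) (P2 : pred T2) (f : T1 -> T2) (h : T2 -> T1) :
  uniq s1 -> uniq s2 ->
  {in s1, forall x, P1 x -> [/\ f x \in s2, P2 (f x) & h (f x) = x]} ->
  {in s2, forall y, P2 y -> [/\ h y \in s1, P1 (h y) & f (h y) = y]} ->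
  count P1 s1 = count P2 s2.
Proof.
move=> u1 u2 fP hP; rewrite -!size_filter -(size_map f).
apply: perm_size; apply: uniq_perm; rewrite ?filter_uniq //.
- rewrite map_inj_in_uniq ?filter_uniq // => x y; rewrite !mem_filter.
  move=> /andP [px x1] /andP [py y1] exy.
  by have [_ _ <-] := fP x x1 px; rewrite exy; have [_ _ ->] := fP y y1 py.
- move=> y; rewrite mem_filter; apply/mapP/andP.
  + by case=> x; rewrite mem_filter => /andP [px x1] ->; have [] := fP x x1 px.
  + case=> py y2; have [x1 px <-] := hP y y2 py.
    by exists (h y); rewrite ?mem_filter ?px.
Qed.

Lemma ncomp_bij (P Q : pred (seq nat)) g g' (f h : seq nat -> seq nat) :
  (forall s, composition s g -> P s ->
     [/\ composition (f s) g', Q (f s) & h (f s) = s]) ->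
  (forall t, composition t g' -> Q t ->
     [/\ composition (h t) g, P (h t) & f (h t) = t]) ->
  ncomp P g = ncomp Q g'.
Proof.
move=> fP hQ; apply: (count_bij (f := f) (h := h)); rewrite ?small_seqs_uniq //.
- move=> s _ /andP [cs ps]; have [ct qt ->] := fP s cs ps.
  by rewrite composition_mem // ct qt.
- move=> t _ /andP [ct qt]; have [cs ps ->] := hQ t ct qt.
  by rewrite composition_mem // cs ps.
Qed.

Lemma ncomp0 (P : pred (seq nat)) g :
  (forall s, composition s g -> ~~ P s) -> ncomp P g = 0.
Proof.
move=> nP; apply/eqP; rewrite -leqn0 leqNgt -has_count.
by apply/hasP => [[s _ /andP [cs ps]]]; move: (nP s cs); rewrite ps.
Qed.

Lemma count_unique (T : eqType) (s : seq T) (P : pred T) (t : T) :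
  uniq s -> (forall x, P x -> x = t) -> count P s = (t \in s) && P t.
Proof.
move=> us Pt; case: (boolP (P t)) => [pt | npt]; rewrite ?andbT ?andbF.
  by rewrite -(count_uniq_mem t us); apply: eq_count => x; apply/idP/eqP => [/Pt|->].
apply/eqP; rewrite -leqn0 leqNgt -has_count; apply/hasP => -[x _ px].
by move: npt; rewrite -(Pt x px) px.
Qed.

Lemma ncomp_unique (P : pred (seq nat)) g t :
  (forall s, composition s g -> P s -> s = t) -> ncomp P g = composition t g && P t.
Proof.
move=> Pt; rewrite /ncomp (count_unique _ (t := t)) ?small_seqs_uniq //.
  by case ct: (composition t g); rewrite ?andbF // composition_mem.
by move=> s /andP [cs ps]; apply: Pt.
Qed.

Lemma count_partition (T K : eqType) (P : pred T) (key : T -> K) (ks : seq K)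
    (s : seq T) :
  uniq ks -> (forall x, P x -> key x \in ks) ->
  count P s = \sum_(k <- ks) count (fun x => P x && (key x == k)) s.
Proof.
move=> uk kP; elim: s => [|x s IH] /=; first by rewrite big1.
rewrite big_split /= -IH; congr (_ + _).
case px: (P x) => /=; last by rewrite big1.
have : count_mem (key x) ks = 1 by rewrite count_uniq_mem // kP.
rewrite -sum1_count big_mkcond /= => <-.
by apply: eq_bigr => k _; rewrite eq_sym; case: (_ == _).
Qed.

Lemma composition_cat z m y g :
  composition (z ++ m :: y) g =
  [&& all (fun x => 0 < x) z, 0 < m, all (fun x => 0 < x) y
    & sumn z + m + sumn y == g].
Proof.
rewrite /composition all_cat /= sumn_cat /= !andbA.
by congr (_ && _); apply/eqP/eqP; lia.
Qed.

Section Concatenation.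

Variables (P A B : pred (seq nat)) (pre suf : seq nat -> seq nat) (m : nat).
Hypothesis m_gt0 : 0 < m.
Hypothesis splitP :
  forall s, P s = [&& s == pre s ++ m :: suf s, A (pre s) & B (suf s)].
Hypothesis catK :
  forall z y, A z -> B y -> pre (z ++ m :: y) = z /\ suf (z ++ m :: y) = y.

Lemma sumn_split s g :
  composition s g -> P s -> sumn (pre s) + m + sumn (suf s) = g.
Proof.
move=> + /[!splitP] /and3P [/eqP es _ _].
by rewrite {1}es composition_cat => /and4P [_ _ _ /eqP].
Qed.

Lemma count_cat_fiber g i : i + m <= g ->
  count (fun s => composition s g && P s && (sumn (pre s) == i)) (small_seqs g) =
  ncomp A i * ncomp B (g - m - i).
Proof.
move=> le_img; rewrite /ncomp -(size_filter _ (small_seqs i)).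
rewrite -(size_filter _ (small_seqs (g - m - i))) -(size_allpairs pair) -count_predT.
apply: (count_bij (f := fun s => (pre s, suf s)) (h := fun p => p.1 ++ m :: p.2)).
- exact: small_seqs_uniq.
- apply: allpairs_uniq; rewrite ?filter_uniq ?small_seqs_uniq //.
  by move=> [? ?] [? ?] _ _ [-> ->].
- move=> s _ /andP [/andP [cs ps] /eqP ei].
  have := ps; rewrite splitP => /and3P [/eqP es zA yB].
  move: cs; rewrite {1}es composition_cat => /and4P [pz _ py /eqP eg].
  split; [|by []|exact: esym].
  have cz : composition (pre s) i by rewrite /composition pz ei eqxx.
  have cy : composition (suf s) (g - m - i) by rewrite /composition py; apply/eqP; lia.
  apply/allpairsP; exists (pre s, suf s).
  by rewrite !mem_filter cz cy zA yB !composition_mem.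
- move=> _ /allpairsP [[z y] [+ + ->]] _ /=.
  rewrite !mem_filter /= => /andP [/andP [cz zA] _] /andP [/andP [cy yB] _].
  have [ez ey] := catK zA yB.
  have cs : composition (z ++ m :: y) g.
    move: cz cy; rewrite composition_cat m_gt0 /composition.
    by move=> /andP [-> /eqP sz] /andP [-> /eqP sy]; apply/eqP; lia.
  rewrite composition_mem // cs splitP ez ey zA yB eqxx /=.
  by case/andP: cz => _ ->.
Qed.

Lemma ncomp_cat g :
  ncomp P g =
  if g < m then 0 else \sum_(i < (g - m).+1) ncomp A i * ncomp B (g - m - i).
Proof.
case: ltnP => [g_lt_m | m_le_g].
  by apply: ncomp0 => s cs; apply/negP => /(sumn_split cs); lia.
rewrite /ncomp (count_partition (key := fun s => sumn (pre s))
                                (ks := iota 0 (g - m).+1)); last 2 first.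
- exact: iota_uniq.
- by move=> s /andP [cs /(sumn_split cs)]; rewrite mem_iota; lia.
rewrite -(subn0 (g - m).+1) -/(index_iota 0 _) big_mkord.
by apply: eq_bigr => i _; rewrite count_cat_fiber //; have := ltn_ord i; lia.
Qed.

End Concatenation.

Definition balanced (n : nat) (z : seq nat) : bool :=
  all (fun i => n <= nth 0 z i + nth 0 z (size z - i.+1)) (iota 0 (size z)).

Definition bal_word (n : nat) (z : seq nat) : bool :=
  all (fun x => x <= n) z && balanced n z.

Lemma maxpart_le s m : (maxpart s <= m) = all (fun x => x <= m) s.
Proof.
by apply/bigmax_leqP_seq/allP => ub x xs; [apply: ub | move=> _; apply: ub].
Qed.

Lemma maxpart_cat z m y :
  all (fun x => x <= m) z -> all (fun x => x < m) y -> maxpart (z ++ m :: y) = m.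
Proof.
move=> zm ym; apply/eqP; rewrite eqn_leq maxpart_le all_cat zm /= leqnn.
rewrite (sub_all _ ym) => [|x /ltnW //].
by apply: (@leq_bigmax_seq _ _ xpredT id); rewrite // mem_cat mem_head orbT.
Qed.

Definition lastmax_index (s : seq nat) : nat :=
  (size s).-1 - index (maxpart s) (rev s).
Definition before_max (s : seq nat) : seq nat := take (lastmax_index s) s.
Definition after_max (s : seq nat) : seq nat := drop (lastmax_index s).+1 s.

Lemma split_max_cat z m y :
  all (fun x => x <= m) z -> all (fun x => x < m) y ->
  before_max (z ++ m :: y) = z /\ after_max (z ++ m :: y) = y.
Proof.
move=> zm ym; rewrite /before_max /after_max.
have -> : lastmax_index (z ++ m :: y) = size z.
  rewrite /lastmax_index maxpart_cat // rev_cat rev_cons cat_rcons index_cat.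
  have -> : (m \in rev y) = false.
    by rewrite mem_rev; apply/negP => /(allP ym); rewrite ltnn.
  rewrite /= eqxx size_rev size_cat /=; lia.
by rewrite take_size_cat // -cat_rcons drop_size_cat ?size_rcons.
Qed.

Lemma all_iota_shift (P : pred nat) a n :
  all P (iota a n) = all (fun i => P (a + i)) (iota 0 n).
Proof. by rewrite -{1}(addn0 a) iotaDl all_map. Qed.

Lemma all_nth_iota (P : pred nat) z :
  all P z = all (fun i => P (nth 0 z i)) (iota 0 (size z)).
Proof. by rewrite -{1}(mkseq_nth 0 z) /mkseq all_map. Qed.

Section AtDisplayedPart.

Variables (z y : seq nat) (m : nat).
Let s := z ++ m :: y.

Lemma part_before i : i < size z -> part s i.+1 = nth 0 z i.
Proof. by move=> iz; rewrite /part /= nth_cat iz. Qed.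

Lemma part_displayed : part s (size z).+1 = m.
Proof. by rewrite /part /= nth_cat ltnn subnn. Qed.

Lemma part_after i : part s ((size z).+2 + i) = nth 0 y i.
Proof.
rewrite /part nth_cat ifF; last by apply/negbTE; rewrite -leqNgt; lia.
by have -> : ((size z).+2 + i).-1 - size z = i.+1 by lia.
Qed.

Lemma last_max_cat :
  last_max s (size z).+1 = all (fun x => x <= m) z && all (fun x => x < m) y.
Proof.
rewrite /last_max.
have -> : size s - (size z).+1 = size y by rewrite /s size_cat /=; lia.
rewrite part_displayed (all_iota_shift _ 1) (all_iota_shift _ (size z).+2) subn1.
rewrite [all _ z]all_nth_iota.
rewrite [all _ y]all_nth_iota (_ : (size z).+1 <= size s); last first.
  by rewrite /s size_cat /= addnS ltnS leq_addr.
rewrite andbT /=; congr (_ && _); apply: eq_in_all => i.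
  by rewrite mem_iota add0n add1n => /andP [_ /part_before ->].
by rewrite part_after.
Qed.

Lemma left_condition_cat :
  all (fun i => part s (size z).+1 <= part s i + part s ((size z).+1 - i))
      (iota 1 ((size z).+1 - 1)) = balanced m z.
Proof.
rewrite part_displayed (all_iota_shift _ 1) /balanced subn1 /=.
apply: eq_in_all => i; rewrite mem_iota add0n => /andP [_ hi].
have -> : (size z).+1 - (1 + i) = (size z - i.+1).+1 by lia.
by rewrite add1n !part_before //; lia.
Qed.

Lemma right_condition_cat :
  all (fun i => part s (size z).+1 <=
                1 + part s ((size z).+1 + i) + part s (size s + 1 - i))
      (iota 1 (size s - (size z).+1)) = balanced m.-1 y.
Proof.
have sz : size s = (size z).+1 + size y by rewrite /s size_cat /=; lia.
rewrite part_displayed (all_iota_shift _ 1) /balanced sz.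
rewrite (_ : _ + _ - _ = size y); last by lia.
apply: eq_in_all => i; rewrite mem_iota add0n => /andP [_ hi].
have -> : (size z).+1 + (1 + i) = (size z).+2 + i by lia.
rewrite part_after.
have -> : (size z).+1 + size y + 1 - (1 + i) = (size z).+2 + (size y - i.+1) by lia.
by rewrite part_after; apply/idP/idP; lia.
Qed.

End AtDisplayedPart.

Lemma split_at_position (s : seq nat) l :
  1 <= l <= size s -> exists z m y, s = z ++ m :: y /\ l = (size z).+1.
Proof.
move=> hl; exists (take l.-1 s), (nth 0 s l.-1), (drop l s); split.
  by rewrite -{1}(cat_take_drop l.-1 s) (drop_nth 0) ?prednK //; lia.
by rewrite size_take; case: ifP; lia.
Qed.

Lemma admissible_split mu s : 0 < mu ->
  (weakly_admissible s && (maxpart s == mu)) =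
  [&& s == before_max s ++ mu :: after_max s,
      bal_word mu (before_max s) & bal_word mu.-1 (after_max s)].
Proof.
move=> mu_gt0.
have lt_pred y : all (fun x => x <= mu.-1) y = all (fun x => x < mu) y.
  by apply: eq_all => x; rewrite -ltnS prednK.
apply/idP/idP.
- case/andP => /hasP [l l_in /and3P [lmax lcond rcond]] /eqP max_mu.
  have [|z [m [y [es el]]]] := split_at_position (s := s) (l := l).
    by case/and3P: lmax.
  subst s l.
  rewrite last_max_cat in lmax; case/andP: lmax => zm ym.
  rewrite maxpart_cat // in max_mu; subst m.
  rewrite left_condition_cat in lcond; rewrite right_condition_cat in rcond.
  have [-> ->] := split_max_cat zm ym.
  by rewrite eqxx /bal_word zm lt_pred ym lcond rcond.
- rewrite /bal_word lt_pred => /and3P [/eqP es /andP [zm lcond] /andP [ym rcond]].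
  rewrite es; set z := before_max s in zm lcond *; set y := after_max s in ym rcond *.
  rewrite maxpart_cat // eqxx andbT; apply/hasP; exists (size z).+1.
    by rewrite mem_iota size_cat /=; lia.
  by rewrite last_max_cat left_condition_cat right_condition_cat zm ym lcond rcond.
Qed.

Lemma w_ncomp mu g :
  w mu g = ncomp (fun s => weakly_admissible s && (maxpart s == mu)) g.
Proof. by rewrite /ncomp count_small_seqs; apply: eq_bigr => k _; apply: eq_card. Qed.

Lemma w_convolution mu g : 0 < mu ->
  w mu g = if g < mu then 0 else
    \sum_(i < (g - mu).+1) ncomp (bal_word mu) i * ncomp (bal_word mu.-1) (g - mu - i).
Proof.
move=> mu_gt0; rewrite w_ncomp.
apply: ncomp_cat => // [s | z y /andP [zm _] /andP [ym _]].
  exact: admissible_split.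
by apply: split_max_cat => //; apply: sub_all ym => x /=; rewrite -ltnS prednK.
Qed.

(* Balanced words are built from the words of length at most one by wrapping:
   a :: rcons m b, with a + b >= n.  The pairs (a, b) allowed are those of I_n. *)
Definition pairs (n : nat) : seq (nat * nat) :=
  [seq p <- [seq (a, b) | a <- index_iota 1 n.+1, b <- index_iota 1 n.+1]
  | n <= p.1 + p.2].

Lemma pairs_uniq n : uniq (pairs n).
Proof.
apply/filter_uniq/allpairs_uniq; rewrite ?iota_uniq //.
by move=> [? ?] [? ?] _ _ /= [-> ->].
Qed.

Lemma mem_pairs n a b :
  ((a, b) \in pairs n) = [&& 1 <= a <= n, 1 <= b <= n & n <= a + b].
Proof.
rewrite mem_filter /=; apply/andP/idP.
- case=> /= sum_ge /allpairsP [[x y] [/= + + [ex ey]]]; subst x y.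
  by rewrite !mem_iota; lia.
- move=> h; split; first lia.
  by apply/allpairsP; exists (a, b); rewrite /= !mem_iota; split=> //; lia.
Qed.

Lemma sum_pairs n (F : nat * nat -> nat) :
  \sum_(p <- pairs n) F p =
  \sum_(1 <= a < n.+1) \sum_(1 <= b < n.+1 | n <= a + b) F (a, b).
Proof.
rewrite big_filter big_mkcond big_allpairs; apply: eq_bigr => a _.
by rewrite [RHS]big_mkcond.
Qed.

Definition inner (s : seq nat) : seq nat := take (size s - 2) (behead s).

Definition outer_key (s : seq nat) : nat * nat :=
  if 2 <= size s then (head 0 s, last 0 s) else (0, size s).

Lemma inner_wrap a m b : inner (a :: rcons m b) = m.
Proof.
rewrite /inner /= size_rcons -cats1 (_ : (size m).+2 - 2 = size m) ?take_size_cat //.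
by rewrite subSS subn1.
Qed.

Lemma outer_key_wrap a m b : outer_key (a :: rcons m b) = (a, b).
Proof. by rewrite /outer_key /= size_rcons last_rcons. Qed.

Lemma outer_keyP s a b : 0 < a -> outer_key s = (a, b) -> s = a :: rcons (inner s) b.
Proof.
move=> a_gt0; rewrite /outer_key; case: ifP => [|_ [a0]]; last by rewrite -a0 in a_gt0.
case: s => [|x r] //=; case/lastP: r => [|m y] //= _.
by rewrite last_rcons inner_wrap => -[-> ->].
Qed.

Lemma outer_key_short s k :
  all (fun x => 0 < x) s -> outer_key s = (0, k) -> size s = k.
Proof.
rewrite /outer_key; case: ifP => [two | _ _ [] //].
by case: s two => [|x r] //= _ /andP [x_gt0 _] [x0]; rewrite x0 in x_gt0.
Qed.

Lemma balanced1 n x : balanced n [:: x] = (n <= x + x).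
Proof. by rewrite /balanced /= andbT. Qed.

Lemma balanced_wrap n a m b :
  balanced n (a :: rcons m b) = (n <= a + b) && balanced n m.
Proof.
have iota_wrap : iota 0 (size m).+2 = 0 :: rcons (iota 1 (size m)) (size m).+1.
  by rewrite -cats1 -[RHS]/(0 :: _) -(iotaD 1 (size m) 1) addn1.
rewrite /balanced [size _]/= size_rcons iota_wrap /= all_rcons.
rewrite subnn /= !nth_rcons ltnn eqxx [b + a]addnC andbA andbb.
congr (_ && _); rewrite (all_iota_shift _ 1).
apply: eq_in_all => i; rewrite mem_iota add0n => /andP [_ hi].
rewrite add1n /= nth_rcons hi.
rewrite (_ : (size m).+2 - i.+2 = (size m - i.+1).+1) /=; last by lia.
by rewrite nth_rcons ifT //; lia.
Qed.

Lemma bal_word_wrap n a m b :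
  bal_word n (a :: rcons m b) = [&& a <= n, b <= n, n <= a + b & bal_word n m].
Proof.
rewrite /bal_word balanced_wrap /= all_rcons.
by case: (a <= n); case: (b <= n); case: (n <= a + b); case: (all _ m).
Qed.

Lemma composition_wrap a m b g :
  composition (a :: rcons m b) g =
  [&& 0 < a, 0 < b, all (fun x => 0 < x) m & a + sumn m + b == g].
Proof.
rewrite /composition /= all_rcons -cats1 sumn_cat /= addn0 addnA.
by case: (0 < a); case: (0 < b); case: (all _ m).
Qed.

Lemma ncomp_wrapped n a b g : (a, b) \in pairs n ->
  ncomp (fun s => bal_word n s && (outer_key s == (a, b))) g =
  if a + b <= g then ncomp (bal_word n) (g - (a + b)) else 0.
Proof.
rewrite mem_pairs => /and3P [/andP [a_gt0 a_le] /andP [b_gt0 b_le] ab_ge].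
have wrapped s : outer_key s == (a, b) -> s = a :: rcons (inner s) b.
  by move=> /eqP; apply: outer_keyP.
case: leqP => [ab_le | ab_gt].
- apply: (ncomp_bij (f := inner) (h := fun t => a :: rcons t b)).
  + move=> s + /andP [+ /wrapped es]; rewrite es inner_wrap.
    rewrite composition_wrap bal_word_wrap => /and4P [_ _ pm /eqP sum].
    move=> /and4P [_ _ _ bm]; split=> //.
    by rewrite /composition pm; apply/eqP; lia.
  + move=> t /andP [pt /eqP st] bt; rewrite inner_wrap outer_key_wrap eqxx.
    rewrite bal_word_wrap a_le b_le ab_ge bt composition_wrap a_gt0 b_gt0 pt.
    by split=> //; apply/eqP; lia.
- apply: ncomp0 => s cs; apply/negP => /andP [_ /wrapped es].
  by move: cs; rewrite es composition_wrap => /and4P [_ _ _ /eqP]; lia.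
Qed.

(* The counts of n-balanced words satisfy the recursion of 1 / (1 - I_n): the
   words of length at most one, plus a wrapped shorter word for each (a, b). *)
Lemma ncomp_bal_word_rec n g : 0 < n ->
  ncomp (bal_word n) g =
  (g == 0) + (uphalf n <= g <= n) +
  \sum_(p <- pairs n)
     (if p.1 + p.2 <= g then ncomp (bal_word n) (g - (p.1 + p.2)) else 0).
Proof.
move=> n_gt0.
have fiber k :
    count (fun s => composition s g && bal_word n s && (outer_key s == k)) (small_seqs g)
    = ncomp (fun s => bal_word n s && (outer_key s == k)) g.
  by apply: eq_count => s; rewrite andbA.
have short k s : all (fun x => 0 < x) s -> outer_key s == (0, k) -> size s = k.
  by move=> pos /eqP; apply: outer_key_short.
rewrite {1}/ncomp (count_partition (key := outer_key)
                                   (ks := (0, 0) :: (0, 1) :: pairs n)).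
- rewrite !big_cons !fiber addnA; congr (_ + _ + _).
  + rewrite (ncomp_unique (t := [::])) /composition /= 1?eq_sym ?andbT //.
    by move=> s /andP [pos _] /andP [_ /(short _ _ pos) /size0nil].
  + rewrite (ncomp_unique (t := [:: g])) /composition /bal_word /= ?balanced1.
      rewrite /outer_key /= addn0 eqxx !andbT leq_uphalf_double -addnn.
      lia.
    move=> s /andP [pos /eqP sum] /andP [_ /(short _ _ pos)].
    by case: s pos sum => [|x []] //= _ <-; rewrite addn0.
  + rewrite big_seq [RHS]big_seq; apply: eq_bigr => -[a b] ab.
    by rewrite fiber (ncomp_wrapped _ ab).
- by rewrite /= !inE !mem_pairs pairs_uniq.
- move=> s /andP [cs bs]; rewrite /outer_key; case: ifP => two.
    case: s two cs bs => [|x r] //; case/lastP: r => [|m y] // _.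
    rewrite composition_wrap bal_word_wrap /= last_rcons !inE mem_pairs.
    by move=> /and4P [x0 y0 _ _] /and4P [xn yn xy _]; rewrite x0 y0 xn yn xy !orbT.
  by rewrite !inE; case: s two {cs bs} => [|x [|y r]].
Qed.

Lemma sum_interval_indicator m p lo hi :
  (\sum_(m <= a < p) (lo <= a < hi) = minn p hi - maxn m lo)%N.
Proof.
elim: p => [|p IH]; first by rewrite big_geq //; lia.
case: (leqP m p) => hm; first by rewrite big_nat_recr // /= IH; lia.
by rewrite big_geq //; lia.
Qed.

Lemma sum_delta m p j (F : nat -> nat) :
  (\sum_(m <= i < p) F i * (j == i) = if m <= j < p then F j else 0)%N.
Proof.
elim: p => [|p IH]; first by rewrite big_geq //; case: ifP; lia.
case: (leqP m p) => hm; last by rewrite big_geq //; case: ifP; lia.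
rewrite big_nat_recr // /= IH.
by case: (eqVneq j p) => [->|ne]; rewrite ?muln1 ?muln0; case: ifP; case: ifP; lia.
Qed.

Local Open Scope ring_scope.

Lemma Posz_sum (I : Type) (r : seq I) (P : pred I) (F : I -> nat) :
  ((\sum_(i <- r | P i) F i)%N)%:Z = \sum_(i <- r | P i) (F i)%:Z.
Proof. exact: (big_morph Posz PoszD). Qed.

Definition series (F : nat -> nat) (G : nat) : {poly int} :=
  \poly_(j < G.+1) (F j)%:Z.

Definition agree_upto (R : nzRingType) (G : nat) (p q : {poly R}) : Prop :=
  forall j, (j <= G)%N -> p`_j = q`_j.

Lemma agree_upto_refl (R : nzRingType) G (p : {poly R}) : agree_upto G p p.
Proof. by []. Qed.

Lemma agree_uptoM (R : nzRingType) G (p p' q q' : {poly R}) :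
  agree_upto G p p' -> agree_upto G q q' -> agree_upto G (p * q) (p' * q').
Proof.
move=> pp qq j jG; rewrite !coefM; apply: eq_bigr => -[i /= hi] _.
by rewrite pp ?qq //; lia.
Qed.

Lemma coef_IpolyM n (p : {poly int}) g :
  (Ipoly n * p)`_g =
  \sum_(1 <= a < n.+1) \sum_(1 <= b < n.+1 | (n <= a + b)%N)
     (if (a + b <= g)%N then p`_(g - (a + b)) else 0).
Proof.
rewrite /Ipoly mulr_suml coef_sum; apply: eq_bigr => a _.
rewrite mulr_suml coef_sum; apply: eq_bigr => b _.
by rewrite coefXnM ltnNge; case: (a + b <= g)%N.
Qed.

Lemma series_rec n (F F0 : nat -> nat) G :
  (forall g, F g = F0 g + \sum_(p <- pairs n)
                 (if p.1 + p.2 <= g then F (g - (p.1 + p.2)) else 0))%N ->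
  agree_upto G ((1 - Ipoly n) * series F G) (series F0 G).
Proof.
move=> recF g hg; rewrite mulrBl mul1r coefB coef_IpolyM !coef_poly ltnS hg recF.
rewrite PoszD sum_pairs Posz_sum -[RHS]addr0 -addrA; congr (_ + _).
apply/eqP; rewrite subr_eq0; apply/eqP; apply: eq_bigr => a _.
rewrite Posz_sum; apply: eq_bigr => b _ /=.
by case: leqP => // hab; rewrite coef_poly ifT //; lia.
Qed.

Lemma balanced_series n G : (0 < n)%N ->
  agree_upto G ((1 - Ipoly n) * series (ncomp (bal_word n)) G)
               (1 + \sum_(uphalf n <= i < n.+1) 'X^i).
Proof.
move=> n_gt0 g hg; rewrite (series_rec (fun g => ncomp_bal_word_rec g n_gt0) hg).
rewrite coef_poly ltnS hg coefD coef1 coef_sum PoszD; congr (_ + _).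
  by case: (g == 0%N).
rewrite (_ : nat_of_bool (uphalf n <= g <= n)%N =
             \sum_(uphalf n <= i < n.+1) (1 * (g == i)))%N.
  by rewrite Posz_sum; apply: eq_bigr => i _; rewrite coefXn mul1n; case: (g == i).
by rewrite sum_delta ltnS; case: ifP.
Qed.

Lemma admissible_series mu G : (0 < mu)%N ->
  agree_upto G (series (w mu) G)
    (series (ncomp (bal_word mu)) G * series (ncomp (bal_word mu.-1)) G * 'X^mu).
Proof.
move=> mu_gt0 g hg; rewrite coef_poly ltnS hg w_convolution // coefMXn.
case: ltnP => // le_mu_g; rewrite coefM Posz_sum; apply: eq_bigr => -[i /= hi] _.
by rewrite !coef_poly !ltnS PoszM !ifT //; lia.
Qed.

(* Closed form of I_n, by comparing coefficients: the coefficient of q^k in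
   I_n counts the a in [1, n] with b = k - a in [1, n] and k >= n. *)
Lemma Ipoly_closed_form n : (1 <= n)%N ->
  Ipoly n = 'X^n * (- 2%:P + \sum_(0 <= i < n.+1) ((n.+1 - i)%:R *: 'X^i)).
Proof.
move=> n_gt0; apply/polyP => k.
have -> : (Ipoly n)`_k = (\sum_(1 <= a < n.+1)
            \sum_(1 <= b < n.+1 | n <= a + b) (k == a + b))%N%:Z.
  rewrite /Ipoly coef_sum Posz_sum; apply: eq_bigr => a _.
  rewrite coef_sum Posz_sum; apply: eq_bigr => b _; rewrite coefXn; by case: eqP.
have -> : (\sum_(1 <= a < n.+1) \sum_(1 <= b < n.+1 | n <= a + b) (k == a + b) =
           \sum_(1 <= a < n.+1) ((k - n <= a < k) && (n <= k)))%N.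
  apply: eq_big_nat => a ha; rewrite big_mkcond /=.
  rewrite (eq_big_nat _ _ (F2 := fun b => (n <= k) * (a < k) * (k - a == b))%N);
    last first.
    by move=> b hb; case: ifP => h; lia.
  by rewrite sum_delta; case: ifP => h; lia.
rewrite coefXnM; case: (ltnP k n) => hk.
  by rewrite big1 //= => a _; lia.
under eq_bigr => a _ do rewrite andbT.
rewrite sum_interval_indicator coefD coefN coefC coef_sum.
have -> : \sum_(0 <= i < n.+1) ((n.+1 - i)%:R *: 'X^i : {poly int})`_(k - n) =
          (\sum_(0 <= i < n.+1) (n.+1 - i) * (k - n == i))%N%:Z.
  rewrite Posz_sum; apply: eq_bigr => i _; rewrite coefZ coefXn.
  by case: eqP => _; rewrite ?mulr1 ?mulr0 ?muln1 ?muln0 // natz.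
by rewrite sum_delta /minn /maxn; repeat case: ifP; lia.
Qed.

Theorem proposition9p1 :
  (forall n : nat, (1 <= n)%N ->
     Ipoly n = 'X^n * (- 2%:P + \sum_(0 <= i < n.+1) ((n.+1 - i)%:R *: 'X^i)))
  /\
  (forall mu : nat, (2 <= mu)%N ->
     let D : {poly int} := (1 - Ipoly mu) * (1 - Ipoly mu.-1) in
     let N : {poly int} :=
       (1 + \sum_(uphalf mu <= i < mu.+1) 'X^i) * 'X^mu *
       (1 + \sum_(mu./2 <= i < mu) 'X^i) in
     forall g : nat,
       \sum_(k < g.+1) D`_k * (w mu (g - k))%:Z = N`_g).
Proof.
split=> [|mu mu_ge2 D N g]; first exact: Ipoly_closed_form.
have mu_gt0 : (0 < mu)%N by lia.
have pred_gt0 : (0 < mu.-1)%N by lia.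
have -> : \sum_(k < g.+1) D`_k * (w mu (g - k))%:Z = (D * series (w mu) g)`_g.
  by rewrite coefM; apply: eq_bigr => -[k /= hk] _; rewrite coef_poly ifT //; lia.
(* W_mu = B_mu * B_(mu-1) * q^mu, and (1 - I_n) * B_n is the numerator factor *)
have admissible := agree_uptoM (agree_upto_refl (G := g) D)
                               (admissible_series (G := g) mu_gt0).
rewrite admissible // (_ : D * _ =
  ((1 - Ipoly mu) * series (ncomp (bal_word mu)) g) *
  ((1 - Ipoly mu.-1) * series (ncomp (bal_word mu.-1)) g) * 'X^mu); last first.
  by rewrite /D; ring.
have numerators := agree_uptoM (balanced_series (G := g) mu_gt0)
                               (balanced_series (G := g) pred_gt0).
rewrite (agree_uptoM numerators (agree_upto_refl (G := g) 'X^mu)) //.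
by rewrite [uphalf mu.-1]uphalfE prednK // /N mulrAC.
Qed.
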